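(* Let $k\ge1$ and $n\ge1$. Let $I_1,I'_1,\dots,I_k,I'_k$ be sets of consecutive integers in $\{1,\dots,n\}$ such that for each $i$, $I_i,I'_i$ is a 1-shift pair, and for each $i=2,\dots,k$, $I_i\cap I'_i\supseteq I_{i-1}\cup I'_{i-1}$. Let $A$ be the $2k\times n$ $(0,1)$-matrix whose row $i$ has its 1's exactly in the columns of $I_i$ and whose row $2k+1-i$ has its 1's exactly in the columns of $I'_i$ ($i=1,\dots,k$), and suppose $A$ has no zero column. Let $R$ and $S$ be the row and column sum vectors of $A$. Then $\mathcal{A}(R,S)$ is a convex-class and consists of exactly $2^k$ matrices.
   Context: $\mathcal{A}(R,S)$ is the set of $(0,1)$-matrices with row sum vector $R$ and column sum vector $S$. A $(0,1)$-matrix is convex if in every row and column the 1's occur consecutively; $\mathcal{A}(R,S)$ is a convex-class if every matrix in it is convex. Two intervals $I=\{a,a+1,\dots,b\}$ and $I'=\{a+1,\dots,b+1\}$ with $a<b$ (in either order) form a 1-shift pair. *)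

From mathcomp Require Import all_boot all_order all_algebra.
Set Implicit Arguments. Unset Strict Implicit. Unset Printing Implicit Defensive.

(* Columns are indexed by 'I_n (0-based: ordinal j stands for column j+1). *)

Definition itv (n a b : nat) : {set 'I_n} := [set j : 'I_n | a <= j <= b].

Definition shift_pair (n : nat) (I J : {set 'I_n}) : Prop :=
  exists a b : nat, [/\ a < b, b.+1 < n &
    ((I = itv n a b /\ J = itv n a.+1 b.+1) \/
     (J = itv n a b /\ I = itv n a.+1 b.+1))].

Definition rowsum m n (M : 'M[bool]_(m, n)) (i : 'I_m) : nat := \sum_(j < n) M i j.
Definition colsum m n (M : 'M[bool]_(m, n)) (j : 'I_n) : nat := \sum_(i < m) M i j.

Definition inAR m n (R : 'I_m -> nat) (S : 'I_n -> nat) (M : 'M[bool]_(m, n)) : bool :=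
  [forall i, rowsum M i == R i] && [forall j, colsum M j == S j].

Definition convex m n (M : 'M[bool]_(m, n)) : Prop :=
  (forall (i : 'I_m) (j1 j j2 : 'I_n), j1 <= j <= j2 -> M i j1 -> M i j2 -> M i j) /\
  (forall (j : 'I_n) (i1 i i2 : 'I_m), i1 <= i <= i2 -> M i1 j -> M i2 j -> M i j).

Definition convex_class m n (R : 'I_m -> nat) (S : 'I_n -> nat) : Prop :=
  forall M : 'M[bool]_(m, n), inAR R S M -> convex M.

(* The 2k x n matrix: (1-based) row i has support I_i and row 2k+1-i has
   support I'_i, for i = 1..k.  With 0-based row r: if r < k it is row i = r+1,
   otherwise it is row 2k+1-i with i = 2k - r. *)
Definition stackA (k n : nat) (I I' : nat -> {set 'I_n}) : 'M[bool]_(k.*2, n) :=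
  \matrix_(r < k.*2, j < n) (if r < k then j \in I r.+1 else j \in I' (k.*2 - r)).

From mathcomp Require Import all_boot all_order all_algebra.
From mathcomp Require Import zify.
Set Implicit Arguments. Unset Strict Implicit. Unset Printing Implicit Defensive.
Import GRing.Theory Num.Theory.

(* Rows l and 2k-1-l (0-based) of A form level l and carry I_(l+1), I'_(l+1).
   By the nesting hypothesis, the number of 1's that column j meets at level l
   is 0, 1 or 2, and once positive it is 2 at every higher level; hence the
   column sum is below, equal to or above t_l = 2(k-1-l)+1 according as that
   number is 0, 1 or 2.  Summing (A - M)_rj (S_j - t_level(r)) >= 0 to zero
   shows that every M in A(R,S) agrees with A wherever S_j <> t_level(r).  The
   remaining entries of a level lie in the two columns where I_(l+1) and
   I'_(l+1) differ, and the row sums force the two rows of the level either to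
   stay or to be exchanged.  So A(R,S) consists of the 2^k matrices obtained by
   exchanging the rows of any set of levels, and these are convex because a
   column meeting a level is full at all higher levels while the levels of the
   rows rise and then fall. *)

Section ThresholdRigidity.
Variables m n : nat.
Implicit Types (A M X : 'M[bool]_(m, n)).

Lemma sum_weighted_entries X (w : 'I_n -> nat) (c : 'I_m -> nat) :
  (\sum_(r < m) \sum_(j < n) ((X r j : nat)%:R * ((w j)%:R - (c r)%:R)) : int)%R =
  (\sum_(j < n) (w j)%:R * (colsum X j)%:R - \sum_(r < m) (c r)%:R * (rowsum X r)%:R)%R.
Proof.
under eq_bigr => r _ do under eq_bigr => j _ do rewrite mulrBr.
under eq_bigr => r _ do rewrite sumrB.
rewrite sumrB; congr (_ - _)%R.
  rewrite exchange_big; apply: eq_bigr => j _.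
  by rewrite /colsum natr_sum mulr_sumr; apply: eq_bigr => r _; rewrite mulrC.
apply: eq_bigr => r _; rewrite /rowsum natr_sum mulr_sumr.
by apply: eq_bigr => j _; rewrite mulrC.
Qed.

(* Each term (A r j - M r j) (colsum A j - c r) is nonnegative, and the
   terms sum to 0 because A and M have the same row and column sums. *)
Lemma inAR_eq_off_threshold A M (c : 'I_m -> nat) :
  (forall r j, A r j -> c r <= colsum A j) ->
  (forall r j, ~~ A r j -> colsum A j <= c r) ->
  inAR (rowsum A) (colsum A) M ->
  forall r j, colsum A j != c r -> M r j = A r j.
Proof.
move=> A_ge A_le /andP[/forallP eqR /forallP eqC] r j neq.
pose D r j : int :=
  (((A r j : nat)%:R - (M r j : nat)%:R) * ((colsum A j)%:R - (c r)%:R))%R.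
have D_ge0 r' j' : (0 <= D r' j')%R.
  rewrite /D; case EA: (A r' j'); case EM: (M r' j'); rewrite /= ?subrr ?mul0r //.
    by rewrite subr0 mul1r subr_ge0 ler_nat A_ge.
  by rewrite sub0r mulN1r oppr_ge0 subr_le0 ler_nat A_le ?EA.
have sumD : (\sum_r \sum_j D r j = 0)%R.
  under eq_bigr => r' _ do under eq_bigr => j' _ do rewrite /D mulrBl.
  under eq_bigr => r' _ do rewrite sumrB.
  rewrite sumrB !sum_weighted_entries.
  have -> : (\sum_j' (colsum A j')%:R * (colsum M j')%:R =
             \sum_j' (colsum A j')%:R * (colsum A j')%:R :> int)%R.
    by apply: eq_bigr => j' _; rewrite (eqP (eqC j')).
  have -> : (\sum_r' (c r')%:R * (rowsum M r')%:R =
             \sum_r' (c r')%:R * (rowsum A r')%:R :> int)%R.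
    by apply: eq_bigr => r' _; rewrite (eqP (eqR r')).
  by rewrite subrr.
have sumDr : (\sum_j D r j = 0)%R.
  by apply: (psumr_eq0P _ sumD) => // r' _; apply: sumr_ge0 => j' _.
have /eqP : D r j = 0%R by apply: (psumr_eq0P _ sumDr).
rewrite /D mulf_eq0 !subr_eq0 !eqr_nat (negbTE neq) orbF.
by case: (A r j); case: (M r j).
Qed.

Lemma colsum_eq_pair A M (p q : 'I_m) j :
  p != q -> colsum M j = colsum A j ->
  (forall r, r != p -> r != q -> M r j = A r j) ->
  M p j + M q j = A p j + A q j.
Proof.
move=> neq_pq; rewrite /colsum (bigD1 p) // (bigD1 q) 1?eq_sym //=.
rewrite [in RHS](bigD1 p) // [in RHS](bigD1 q) 1?eq_sym //= => + eqM.
rewrite (eq_bigr (fun r => A r j : nat)) => [|r /andP[rp rq]]; last by rewrite eqM.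
by move/eqP; rewrite !addnA eqn_add2r => /eqP.
Qed.

End ThresholdRigidity.

Lemma sum_split_at (f : nat -> nat) k l : l < k ->
  \sum_(i < k) f i = \sum_(0 <= i < l) f i + (f l + \sum_(l.+1 <= i < k) f i).
Proof.
move=> lt_lk; rewrite -(big_mkord xpredT) (big_cat_nat _ (n := l)) //=.
  by rewrite [\sum_(l <= i < k) _]big_ltn.
exact: ltnW.
Qed.

Lemma sum_ge_const_tail (f : nat -> nat) k l c : l < k ->
  (forall i, l < i < k -> f i = c) -> f l + (k.-1 - l) * c <= \sum_(i < k) f i.
Proof.
move=> lt_lk tail; rewrite (sum_split_at f lt_lk) (eq_big_nat _ _ tail).
rewrite sum_nat_const_nat; lia.
Qed.

Lemma sum_le_const_tail (f : nat -> nat) k l c : l < k ->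
  (forall i, i < l -> f i = 0) -> (forall i, f i <= c) ->
  \sum_(i < k) f i <= f l + (k.-1 - l) * c.
Proof.
move=> lt_lk head le_c; rewrite (sum_split_at f lt_lk).
rewrite (eq_big_nat _ _ (F2 := fun=> 0) (fun i lt_il => head i (andP lt_il).2)).
rewrite sum_nat_const_nat muln0 add0n leq_add2l.
apply: (@leq_trans (\sum_(l.+1 <= i < k) c)); first by apply: leq_sum => i _.
rewrite sum_nat_const_nat; lia.
Qed.

Definition consecutive n (S : {set 'I_n}) : Prop :=
  forall j1 j j2 : 'I_n, j1 <= j <= j2 -> j1 \in S -> j2 \in S -> j \in S.

Definition differ_at (T : finType) (a b : T -> bool) (x y : T) : Prop :=
  [/\ a x, ~~ b x, b y, ~~ a y & forall j, j != x -> j != y -> a j = b j].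

Lemma itv_consecutive n a b : consecutive (itv n a b).
Proof. by move=> j1 j j2; rewrite !inE; lia. Qed.

Lemma shift_pair_consecutive n (I J : {set 'I_n}) :
  shift_pair I J -> consecutive I /\ consecutive J.
Proof. by case=> a [b [_ _ [[-> ->]|[-> ->]]]]; split; apply: itv_consecutive. Qed.

Lemma shift_pair_differ n (I J : {set 'I_n}) : shift_pair I J ->
  exists x y, differ_at (fun j => j \in I) (fun j => j \in J) x y.
Proof.
case=> a [b [lt_ab lt_bn shift]].
have lt_an : a < n by lia.
have out j : j != Ordinal lt_an -> j != Ordinal lt_bn ->
  (a <= j <= b) = (a < j <= b.+1).
  by rewrite -!val_eqE /=; lia.
case: shift => [[-> ->]|[-> ->]]; [exists (Ordinal lt_an), (Ordinal lt_bn)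
  | exists (Ordinal lt_bn), (Ordinal lt_an)];
  split=> [||||j jx jy]; rewrite /= ?inE /= ?out //; try lia.
Qed.

Section PairSwap.
Variables (T : finType) (a b : T -> bool) (x y : T).
Hypothesis abxy : differ_at a b x y.

Lemma differ_at_neq : x != y.
Proof. by case: abxy => ax _ _ nay _; apply/eqP => exy; rewrite -exy ax in nay. Qed.

Lemma sum_split_pair (F : T -> nat) :
  \sum_j F j = F x + F y + \sum_(j | (j != x) && (j != y)) F j.
Proof.
rewrite (bigD1 x) // (bigD1 (P := fun j => j != x) y) 1?eq_sym ?differ_at_neq //=.
by rewrite addnA; congr (_ + _); apply: eq_bigl => j.
Qed.

Lemma differ_at_sum : \sum_j (b j : nat) = \sum_j (a j : nat).
Proof.
case: abxy => ax nbx b_y nay eq_ab.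
rewrite !sum_split_pair ax b_y (negbTE nbx) (negbTE nay); congr (_ + _).
by apply: eq_bigr => j /andP[jx jy]; rewrite eq_ab.
Qed.

Lemma differ_at_swap (m m' : T -> bool) :
  (forall j, m j + m' j = a j + b j) -> \sum_j (m j : nat) = \sum_j (a j : nat) ->
  (m =1 a /\ m' =1 b) \/ (m =1 b /\ m' =1 a).
Proof.
case: abxy => ax nbx b_y nay eq_ab sum_mm' sum_m.
have out j : j != x -> j != y -> m j = a j /\ m' j = b j.
  by move=> jx jy; move: (sum_mm' j); rewrite -(eq_ab j jx jy); do 3!case: (_ j).
have {}sum_m : m x + m y = 1.
  move: sum_m; rewrite !sum_split_pair ax (negbTE nay).
  rewrite (eq_bigr (fun j => a j : nat)) => [|j /andP[jx jy]].
    by move/eqP; rewrite eqn_add2r => /eqP.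
  by rewrite (out j jx jy).1.
have m'x : m' x = ~~ m x.
  by move: (sum_mm' x); rewrite ax (negbTE nbx); case: (m x); case: (m' x).
have m'y : m' y = ~~ m y.
  by move: (sum_mm' y); rewrite b_y (negbTE nay); case: (m y); case: (m' y).
have my : m y = ~~ m x by move: sum_m; case: (m x); case: (m y).
rewrite my negbK in m'y.
case Emx: (m x) in my m'x m'y *; [left | right]; split=> j;
  (have [->|jx] := eqVneq j x; first by rewrite ?Emx ?m'x ?ax ?(negbTE nbx));
  (have [->|jy] := eqVneq j y; first by rewrite ?my ?m'y ?b_y ?(negbTE nay));
  by rewrite ?(out j jx jy).1 ?(out j jx jy).2 ?eq_ab.
Qed.

End PairSwap.

Section Levels.
Variable k : nat.

Definition row_level (r : nat) : nat := if r < k then r else k.*2 - r.+1.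

Lemma row_level_lt (r : 'I_k.*2) : row_level r < k.
Proof. by have := ltn_ord r; rewrite /row_level; case: ifP; lia. Qed.

Definition level (r : 'I_k.*2) : 'I_k := Ordinal (row_level_lt r).

Lemma level_rev (r : 'I_k.*2) : level (rev_ord r) = level r.
Proof.
by apply: val_inj; have := ltn_ord r; rewrite /= /row_level /=; do 2!case: ifP; lia.
Qed.

Lemma ltn_ord_double (l : 'I_k) : l < k.*2.
Proof. by have := ltn_ord l; lia. Qed.

Definition top (l : 'I_k) : 'I_k.*2 := Ordinal (ltn_ord_double l).

Definition bot (l : 'I_k) : 'I_k.*2 := rev_ord (top l).

Lemma rev_bot (l : 'I_k) : rev_ord (bot l) = top l.
Proof. exact: rev_ordK. Qed.

Lemma level_top (l : 'I_k) : level (top l) = l.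
Proof. by apply: val_inj; rewrite /= /row_level ltn_ord. Qed.

Lemma level_bot (l : 'I_k) : level (bot l) = l.
Proof. by rewrite level_rev level_top. Qed.

Lemma top_neq_bot (l : 'I_k) : top l != bot l.
Proof. by apply/eqP => /(congr1 val) /=; have := ltn_ord l; lia. Qed.

Lemma levelP (r : 'I_k.*2) : r = top (level r) \/ r = bot (level r).
Proof.
have := ltn_ord r; case: (ltnP r k) => [lt_rk|le_kr] lt_r; [left | right];
  by apply: val_inj; rewrite /= /row_level; case: ifP; lia.
Qed.

Lemma level_eqP (r : 'I_k.*2) (l : 'I_k) :
  reflect (r = top l \/ r = bot l) (level r == l).
Proof.
apply: (iffP eqP) => [<-|[->|->]]; by [apply: levelP | rewrite ?level_top ?level_bot].
Qed.

(* Levels rise strictly up to k-1 and then fall strictly. *)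
Lemma level_unimodal (r1 r r2 : 'I_k.*2) : r1 <= r <= r2 ->
  level r <= level r1 -> level r <= level r2 -> r = r1 \/ r = r2.
Proof.
move=> le_r hl1 hl2; have [->|ne] := eqVneq r r1; [by left | right; apply: val_inj].
move: ne le_r hl1 hl2 (ltn_ord r2); rewrite -val_eqE /= /row_level.
by do 3!case: ifP; lia.
Qed.

End Levels.

Arguments level {k}.

Section Stack.
Variables (k n : nat) (I I' : nat -> {set 'I_n}).
Hypothesis shiftI : forall i, 1 <= i <= k -> shift_pair (I i) (I' i).
Hypothesis nestedI :
  forall i, 2 <= i <= k -> (I i.-1 :|: I' i.-1) \subset (I i :&: I' i).

Local Notation A := (stackA k I I').
Local Notation inA M := (inAR (rowsum A) (colsum A) M).

Lemma level_shift_pair (l : 'I_k) : shift_pair (I l.+1) (I' l.+1).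
Proof. by apply: shiftI; rewrite ltn_ord. Qed.

Lemma stackA_top (l : 'I_k) j : A (top l) j = (j \in I l.+1).
Proof. by rewrite mxE /= ltn_ord. Qed.

Lemma stackA_bot (l : 'I_k) j : A (bot l) j = (j \in I' l.+1).
Proof.
rewrite mxE /=; have := ltn_ord l => lt_lk.
by rewrite ifN; [congr (_ \in I' _) | rewrite -leqNgt]; lia.
Qed.

Definition level_count (l : nat) (j : 'I_n) : nat := (j \in I l.+1) + (j \in I' l.+1).

Lemma level_countE (l : 'I_k) j : level_count l j = A (top l) j + A (bot l) j.
Proof. by rewrite stackA_top stackA_bot. Qed.

Lemma level_count_le2 l j : level_count l j <= 2.
Proof. by rewrite /level_count; do 2!case: (_ \in _). Qed.

Lemma level_count_step l j : l.+1 < k -> 0 < level_count l j -> level_count l.+1 j = 2.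
Proof.
move=> lt_lk pos; have /subsetP sub := nestedI (ltac:(lia) : 2 <= l.+2 <= k).
have : j \in I l.+1 :|: I' l.+1.
  by move: pos; rewrite inE /level_count; do 2!case: (_ \in _).
by move/sub; rewrite inE /level_count => /andP[-> ->].
Qed.

Lemma level_count_nested l l' j :
  l < l' < k -> 0 < level_count l j -> level_count l' j = 2.
Proof.
elim: l' => [|l' IH] // /andP[lt_ll' lt_l'k] pos; apply: level_count_step => //.
by have [<-|ne] := eqVneq l l' => //; rewrite IH //; lia.
Qed.

Lemma colsum_stack j : colsum A j = \sum_(l < k) level_count l j.
Proof.
rewrite /colsum (partition_big level xpredT) //; apply: eq_bigr => l _.
rewrite level_countE (bigD1 (top l)) ?level_top //= (bigD1 (bot l)) /=; last first.
  by rewrite level_bot eqxx eq_sym top_neq_bot.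
rewrite big_pred0 ?addnA ?addn0 // => r; apply/negbTE; rewrite -!andbA.
by apply/and3P => -[/level_eqP[->|->]]; rewrite eqxx // andbF.
Qed.

Definition threshold (l : nat) : nat := ((k.-1 - l) * 2).+1.

Lemma threshold_inj (l l' : 'I_k) : threshold l = threshold l' -> l = l'.
Proof.
by have := ltn_ord l; have := ltn_ord l'; rewrite /threshold => *; apply: ord_inj; lia.
Qed.

(* The levels above the first one met by column j contribute 2 each. *)
Lemma colsum_vs_threshold (l : 'I_k) j :
  [/\ level_count l j = 0 -> colsum A j < threshold l,
      level_count l j = 1 -> colsum A j = threshold l &
      level_count l j = 2 -> threshold l < colsum A j].
Proof.
rewrite colsum_stack /threshold; set c := level_count l j.
have lower : 0 < c -> c + (k.-1 - l) * 2 <= \sum_(i < k) level_count i j.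
  move=> pos; apply: (sum_ge_const_tail (f := level_count ^~ j)) => // i lt_i.
  exact: level_count_nested pos.
have upper : c <= 1 -> \sum_(i < k) level_count i j <= c + (k.-1 - l) * 2.
  move=> le1; apply: (sum_le_const_tail (f := level_count ^~ j)) => // [i lt_il|i].
  - apply/eqP; apply: contraTT le1; rewrite -lt0n => pos.
    by rewrite /c (level_count_nested _ pos) // lt_il ltn_ord.
  - exact: level_count_le2.
by split=> e; [have := upper | have := upper; have := lower | have := lower];
  rewrite e; lia.
Qed.

Lemma stack_count_bounds (r : 'I_k.*2) j :
  A r j <= level_count (level r) j <= A r j + 1.
Proof.
by rewrite level_countE; case: (levelP r) => ->; rewrite ?level_top ?level_bot;
  do 2!case: (A _ j).
Qed.

Lemma stack_rigid M : inA M ->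
  forall r j, colsum A j != threshold (level r) -> M r j = A r j.
Proof.
apply: inAR_eq_off_threshold => r j Arj;
  have := stack_count_bounds r j; have := level_count_le2 (level r) j;
  have [lt0 eq1 gt2] := colsum_vs_threshold (level r) j;
  rewrite ?Arj ?(negbTE Arj);
  case: (level_count (level r) j) lt0 eq1 gt2 => [|[|[|c]]] lt0 eq1 gt2 //= _ _.
- by rewrite eq1.
- exact/ltnW/gt2.
- exact/ltnW/lt0.
- by rewrite eq1.
Qed.

Lemma stack_rigid_count M : inA M ->
  forall r j, level_count (level r) j != 1 -> M r j = A r j.
Proof.
move=> inM r j ne1; apply: (stack_rigid inM).
have [lt0 _ gt2] := colsum_vs_threshold (level r) j.
have := level_count_le2 (level r) j.
case: (level_count (level r) j) ne1 lt0 gt2 => [|[|[|c]]] //= _ lt0 gt2 _.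
- by rewrite ltn_eqF ?lt0.
- by rewrite gtn_eqF ?gt2.
Qed.

Lemma level_rows_sum M : inA M ->
  forall (l : 'I_k) j, M (top l) j + M (bot l) j = A (top l) j + A (bot l) j.
Proof.
move=> inM l j; have [eq1|ne1] := eqVneq (level_count l j) 1; last first.
  by rewrite !(stack_rigid_count inM) ?level_top ?level_bot.
apply: colsum_eq_pair (top_neq_bot l) _ _.
  by have /andP[_ /forallP/(_ j)/eqP] := inM.
move=> r r_top r_bot; apply: (stack_rigid inM).
have [_ /(_ eq1) -> _] := colsum_vs_threshold l j.
apply: contra_neq r_top => /threshold_inj eq_l.
have /level_eqP[] // : level r == l by rewrite eq_l.
by move/eqP; rewrite (negbTE r_bot).
Qed.

Lemma level_differ (l : 'I_k) : exists x y, differ_at (A (top l)) (A (bot l)) x y.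
Proof.
have [x [y [Ix nI'x I'y nIy eqII']]] := shift_pair_differ (level_shift_pair l).
exists x, y; split=> [||||j jx jy]; rewrite ?stackA_top ?stackA_bot //.
exact: eqII'.
Qed.

Lemma level_rows_swap M : inA M -> forall l : 'I_k,
  (M (top l) =1 A (top l) /\ M (bot l) =1 A (bot l)) \/
  (M (top l) =1 A (bot l) /\ M (bot l) =1 A (top l)).
Proof.
move=> inM l; have [x [y differ]] := level_differ l.
apply: (differ_at_swap differ (level_rows_sum inM l)).
by have /andP[/forallP/(_ (top l))/eqP] := inM.
Qed.

Definition swap_rows (f : {ffun 'I_k -> bool}) (r : 'I_k.*2) : 'I_k.*2 :=
  if f (level r) then rev_ord r else r.

Lemma swap_rowsK f : involutive (swap_rows f).
Proof.
move=> r; rewrite /swap_rows; case fr: (f (level r)); last by rewrite fr.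
by rewrite level_rev fr rev_ordK.
Qed.

Lemma level_swap_rows f r : level (swap_rows f r) = level r.
Proof. by rewrite /swap_rows; case: ifP; rewrite ?level_rev. Qed.

Definition swapped (f : {ffun 'I_k -> bool}) : 'M[bool]_(k.*2, n) :=
  \matrix_(r, j) A (swap_rows f r) j.

Lemma swappedE f r j : swapped f r j = A (swap_rows f r) j.
Proof. exact: mxE. Qed.

Lemma rowsum_rev r : rowsum A (rev_ord r) = rowsum A r.
Proof.
suff rowsum_bot l : rowsum A (bot l) = rowsum A (top l).
  by case: (levelP r) => ->; rewrite ?rev_bot rowsum_bot.
by have [x [y differ]] := level_differ l; apply: differ_at_sum differ.
Qed.

Lemma swapped_inA f : inA (swapped f).
Proof.
apply/andP; split; apply/forallP => i; apply/eqP.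
  have -> : rowsum (swapped f) i = rowsum A (swap_rows f i).
    by apply: eq_bigr => j _; rewrite swappedE.
  by rewrite /swap_rows; case: ifP; rewrite ?rowsum_rev.
have -> : colsum (swapped f) i = \sum_r A (swap_rows f r) i.
  by apply: eq_bigr => r _; rewrite swappedE.
by rewrite /colsum [RHS](reindex_inj (can_inj (swap_rowsK f))).
Qed.

Lemma swapped_inj : injective swapped.
Proof.
move=> f g /matrixP eq_fg; apply/ffunP => l.
have [x [_ [Ax nAx _ _ _]]] := level_differ l.
move: (eq_fg (top l) x); rewrite !swappedE /swap_rows level_top.
by case: (f l); case: (g l); rewrite //= -/(bot l) (negbTE nAx) Ax.
Qed.

Lemma inA_swapped M : inA M -> exists f, M = swapped f.
Proof.
move=> inM; exists [ffun l => [exists j, M (top l) j != A (top l) j]].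
apply/matrixP => r j; rewrite swappedE /swap_rows ffunE.
set l := level r; have rl : r = top l \/ r = bot l := levelP r.
case: (level_rows_swap inM l) => [[Mt Mb]|[Mt Mb]].
  have -> : [exists j, M (top l) j != A (top l) j] = false.
    by apply/existsP => -[j']; rewrite Mt eqxx.
  by case: rl => ->; rewrite ?Mt ?Mb.
have -> : [exists j, M (top l) j != A (top l) j].
  have [x [_ [Ax nAx _ _ _]]] := level_differ l.
  by apply/existsP; exists x; rewrite Mt (negbTE nAx) Ax.
by case: rl => ->; rewrite ?rev_bot ?Mt ?Mb.
Qed.

Lemma swapped_convex f : convex (swapped f).
Proof.
split=> [r j1 j j2 | j r1 r r2]; rewrite !swappedE.
  set s := swap_rows f r; have : s = top (level s) \/ s = bot (level s) := levelP s.
  have [conv conv'] := shift_pair_consecutive (level_shift_pair (level s)).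
  by case=> ->; rewrite ?stackA_top ?stackA_bot; [apply: conv | apply: conv'].
have pos r' : A (swap_rows f r') j -> 0 < level_count (level r') j.
  move=> Ar; have := stack_count_bounds (swap_rows f r') j.
  by rewrite level_swap_rows Ar => /andP[].
have full r' : level_count (level r') j = 2 -> A (swap_rows f r') j.
  move=> lc2; have := stack_count_bounds (swap_rows f r') j.
  by rewrite level_swap_rows lc2; case: (A _ j).
move=> le_r M1 M2.
have [lt1|le1] := ltnP (level r1) (level r).
  by apply: full; apply: level_count_nested (pos _ M1); rewrite lt1 ltn_ord.
have [lt2|le2] := ltnP (level r2) (level r).
  by apply: full; apply: level_count_nested (pos _ M2); rewrite lt2 ltn_ord.
by case: (level_unimodal le_r le1 le2) => ->.
Qed.

Lemma convex_class_stack : convex_class (rowsum A) (colsum A).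
Proof. by move=> M /inA_swapped[f ->]; apply: swapped_convex. Qed.

Lemma card_inA_stack : #|[set M : 'M[bool]_(k.*2, n) | inA M]| = 2 ^ k.
Proof.
have -> : [set M : 'M[bool]_(k.*2, n) | inA M] = swapped @: setT.
  apply/setP => M; rewrite inE; apply/idP/imsetP => [/inA_swapped[f ->]|[f _ ->]].
    by exists f; rewrite ?inE.
  exact: swapped_inA.
by rewrite card_imset ?cardsT ?card_ffun ?card_bool ?card_ord //; apply: swapped_inj.
Qed.

End Stack.

Theorem mainTheorem10 (k n : nat) (I I' : nat -> {set 'I_n}) :
  1 <= k -> 1 <= n ->
  (forall i, 1 <= i <= k -> shift_pair (I i) (I' i)) ->
  (forall i, 2 <= i <= k -> (I i.-1 :|: I' i.-1) \subset (I i :&: I' i)) ->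
  (forall j : 'I_n, exists r : 'I_(k.*2), stackA k I I' r j) ->
  convex_class (rowsum (stackA k I I')) (colsum (stackA k I I')) /\
  #|[set M : 'M[bool]_(k.*2, n) |
      inAR (rowsum (stackA k I I')) (colsum (stackA k I I')) M]| = 2 ^ k.
Proof.
move=> _ _ shiftI nestedI _.
by split; [apply: convex_class_stack | apply: card_inA_stack].
Qed.
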